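(* For every simple game $v$ on $n\ge 2$ players and every player $i$ that is not a dictator in $v$, we have $\mathrm{SSI}_i(v)\le \frac{n-1}{n}$.
   Context: A simple game on $N=\{1,\dots,n\}$ is a surjective, monotone map $v\colon 2^N\to\{0,1\}$ (monotone: $v(S)\le v(T)$ whenever $S\subseteq T\subseteq N$). Player $j$ is a null player if $v(S)=v(S\cup\{j\})$ for all $S\subseteq N\setminus\{j\}$; player $i$ is a dictator if $v(\{i\})=1$ and all other players are null players. The Shapley–Shubik index is $\mathrm{SSI}_i(v)=\sum_{S\subseteq N\setminus\{i\}}\frac{|S|!\,(n-|S|-1)!}{n!}\,\big(v(S\cup\{i\})-v(S)\big)$. *)

(* Players N = {1..n} are modelled as 'I_n (0-based). *)
From HB Require Import structures.
From mathcomp Require Import all_boot all_order all_algebra.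
Set Implicit Arguments. Unset Strict Implicit. Unset Printing Implicit Defensive.
Import Order.TTheory GRing.Theory Num.Theory.

Definition monotone_game (n : nat) (v : {set 'I_n} -> bool) : Prop :=
  forall S T : {set 'I_n}, S \subset T -> v S <= v T.

Definition surjective_game (n : nat) (v : {set 'I_n} -> bool) : Prop :=
  (exists S, v S = false) /\ (exists S, v S = true).

Definition simple_game (n : nat) (v : {set 'I_n} -> bool) : Prop :=
  surjective_game v /\ monotone_game v.

Definition null_player (n : nat) (v : {set 'I_n} -> bool) (j : 'I_n) : Prop :=
  forall S : {set 'I_n}, j \notin S -> v S = v (j |: S).

Definition dictator (n : nat) (v : {set 'I_n} -> bool) (i : 'I_n) : Prop :=
  v [set i] = true /\ forall j : 'I_n, j != i -> null_player v j.

Local Open Scope ring_scope.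

Definition SSI (n : nat) (v : {set 'I_n} -> bool) (i : 'I_n) : rat :=
  \sum_(S : {set 'I_n} | i \notin S)
     ((#|S|`! * (n - #|S| - 1)`!)%:R / (n`!)%:R) *
     ((v (i |: S) : nat)%:R - (v S : nat)%:R).

(** A non-dictator [i] has a null marginal contribution at the empty coalition
    or at the coalition of all other players: if [v {i} = 1] and
    [v (N \ {i}) = 0], monotonicity forces [v S = 1] exactly when [i \in S],
    which makes [i] a dictator.  Both extreme coalitions carry the Shapley
    weight [1/n], the weights sum to [1] and marginal contributions are at
    most [1], so [SSI_i v <= 1 - 1/n]. *)
From mathcomp Require Import all_boot all_order all_algebra.
From mathcomp Require Import zify.
Import Order.TTheory GRing.Theory Num.Theory.

Set Implicit Arguments.
Unset Strict Implicit.
Unset Printing Implicit Defensive.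

Lemma subsetC1 (T : finType) (x : T) (A : {set T}) :
  (A \subset [set~ x]) = (x \notin A).
Proof.
apply/subsetP/idP => [sAC | xA y yA].
  by apply/negP => /sAC; rewrite !inE eqxx.
by rewrite !inE; apply: contraNneq xA => <-.
Qed.

Lemma sum_subset_card (T : finType) (B : {set T}) (F : nat -> nat) :
  (\sum_(A : {set T} | A \subset B) F #|A| = \sum_(k < #|B|.+1) 'C(#|B|, k) * F k)%N.
Proof.
have cardA_lt (A : {set T}) : A \subset B -> (#|A| < #|B|.+1)%N.
  by rewrite ltnS => /subset_leq_card.
rewrite (partition_big (fun A : {set T} => inord #|A| : 'I_#|B|.+1) xpredT) //=.
apply: eq_bigr => k _.
have sameA (A : {set T}) :
    (A \subset B) && (inord #|A| == k) = (A \in [set A' : {set T} | A' \subset B & #|A'| == k]).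
  rewrite inE; apply: andb_id2l => /cardA_lt ltAB.
  by apply/eqP/eqP => [<- | ->]; rewrite ?inordK ?inord_val.
rewrite (eq_bigl _ _ sameA) (eq_bigr (fun=> F k)) => [|A].
  by rewrite sum_nat_const cards_draws.
by rewrite inE => /andP[_ /eqP ->].
Qed.

Lemma sum_shapley_weights_nat (n : nat) (i : 'I_n) :
  (\sum_(S : {set 'I_n} | i \notin S) #|S|`! * (n - #|S| - 1)`! = n`!)%N.
Proof.
case: n i => [[] //|m] i.
rewrite (eq_bigl _ _ (fun S => esym (subsetC1 i S))).
rewrite (eq_bigr (fun S : {set 'I_m.+1} => #|S|`! * (m - #|S|)`!))%N => [|S _];
  last by rewrite subn1 subSKn.
rewrite (sum_subset_card _ (fun k => k`! * (m - k)`!)%N) cardsC1 card_ord /=.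
rewrite (eq_bigr (fun=> m`!)) => [|k _]; last by rewrite bin_fact // -ltnS.
by rewrite sum_nat_const card_ord factS.
Qed.

Local Open Scope ring_scope.

Section ShapleyWeights.

Variables (R : numFieldType) (n : nat).

Definition shapley_weight (k : nat) : R := (k`! * (n - k - 1)`!)%:R / (n`!)%:R.

Lemma shapley_weight_ge0 k : 0 <= shapley_weight k.
Proof. by rewrite divr_ge0 ?ler0n. Qed.

Lemma sum_shapley_weight (i : 'I_n) :
  \sum_(S : {set 'I_n} | i \notin S) shapley_weight #|S| = 1.
Proof.
rewrite -mulr_suml -natr_sum sum_shapley_weights_nat divff //.
by rewrite pnatr_eq0 -lt0n fact_gt0.
Qed.

Lemma shapley_weight_extreme k : (0 < n)%N -> (k = 0 \/ k = n.-1)%N ->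
  shapley_weight k = n%:R^-1.
Proof.
rewrite /shapley_weight; case: n => [//|m] _ k0m.
have -> : (k`! * (m.+1 - k - 1)`! = m`!)%N.
  case: k0m => ->; first by rewrite fact0 mul1n subn0 subn1.
  by rewrite /= subn1 subSKn subnn fact0 muln1.
rewrite factS natrM invfM mulrCA divff ?mulr1 //.
by rewrite pnatr_eq0 -lt0n fact_gt0.
Qed.

End ShapleyWeights.

Lemma sum_wM_le_sub (R : numDomainType) (I : finType) (P : pred I)
    (w c : I -> R) (i0 : I) :
  P i0 -> (forall i, P i -> 0 <= w i) -> (forall i, P i -> c i <= 1) ->
  c i0 = 0 ->
  \sum_(i | P i) w i * c i <= \sum_(i | P i) w i - w i0.
Proof.
move=> Pi0 w_ge0 c_le1 ci0.
rewrite (bigD1 i0) //= ci0 mulr0 add0r [X in _ <= X - _](bigD1 i0) //= addrC addrK.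
apply: ler_sum => i /andP[Pi _].
by rewrite -[leRHS]mulr1 ler_wpM2l ?w_ge0 ?c_le1.
Qed.

Section SimpleGames.

Variables (n : nat) (v : {set 'I_n} -> bool).
Hypothesis v_mono : monotone_game v.

Lemma marginal_le1 (i : 'I_n) S : (v (i |: S) : nat)%:R - (v S : nat)%:R <= 1 :> rat.
Proof. by case: (v S); case: (v (i |: S)). Qed.

Lemma monotone_game_mem (i : 'I_n) :
  v [set i] -> ~~ v [set~ i] -> forall S, v S = (i \in S).
Proof.
move=> vi vCi S; case: (boolP (i \in S)) => iS.
  have := v_mono (_ : [set i] \subset S); rewrite sub1set iS vi => /(_ isT).
  by case: (v S).
have := v_mono (_ : S \subset [set~ i]); rewrite subsetC1 iS (negbTE vCi) => /(_ isT).
by case: (v S).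
Qed.

Lemma monotone_game_dictator (i : 'I_n) :
  v [set i] -> ~~ v [set~ i] -> dictator v i.
Proof.
move=> vi vCi; have vE := monotone_game_mem vi vCi.
split=> [|j ji S _]; first exact: vi.
by rewrite !vE !inE eq_sym (negbTE ji).
Qed.

Lemma not_dictator_null_marginal (i : 'I_n) : ~ dictator v i ->
  exists2 S : {set 'I_n}, i \notin S &
    (#|S| = 0 \/ #|S| = n.-1)%N /\ v (i |: S) = v S.
Proof.
move=> not_dict.
case vi: (v [set i]); last first.
  exists set0; rewrite ?inE // cards0 setU0 vi; split; first by left.
  by have := v_mono (sub0set [set i]); rewrite vi; case: (v set0).
case vCi: (v [set~ i]).
  exists [set~ i]; rewrite ?inE ?eqxx // cardsC1 card_ord setUCr vCi; split; first by right.
  by have := v_mono (subsetT [set~ i]); rewrite vCi; case: (v setT).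
by case: not_dict; apply: monotone_game_dictator; rewrite ?vi ?vCi.
Qed.

End SimpleGames.

Theorem theorem1 (n : nat) (hn : (2 <= n)%N) (v : {set 'I_n} -> bool)
  (hv : simple_game v) (i : 'I_n) (hi : ~ dictator v i) :
  (SSI v i <= (n - 1)%:R / n%:R :> rat)%R.
Proof.
have [_ v_mono] := hv.
have [S0 iS0 [cardS0 null_S0]] := not_dictator_null_marginal v_mono hi.
have -> : (n - 1)%:R / n%:R = 1 - shapley_weight rat n #|S0|.
  rewrite shapley_weight_extreme ?natrB 1?mulrBl ?divff ?mul1r ?pnatr_eq0 //; lia.
rewrite -(sum_shapley_weight rat i).
apply: sum_wM_le_sub => // [S _|S _|]; first exact: shapley_weight_ge0.
  exact: marginal_le1.
by rewrite null_S0 subrr.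
Qed.
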